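(* Let $F:\mathbb{R}^d\to\mathbb{R}^d$ be $L$-Lipschitz, $G:\mathbb{R}^d\rightrightarrows\mathbb{R}^d$ maximally monotone, the solution set of $0\in F(x)+G(x)$ nonempty, and $x^\star$ a solution satisfying $\langle u,x-x^\star\rangle\ge-\rho\|u\|^2$ for all $(x,u)$ in the graph of $F+G$, with $0<\rho<\eta$. Let $\alpha=1-\frac\rho\eta$ and suppose $(x_k)$ satisfies $x_{k+1}=(1-\alpha)x_k+\alpha\widetilde J_k$ where $\|J_{\eta(F+G)}(x_k)-\widetilde J_k\|\le\varepsilon_k$ for some $\varepsilon_k>0$. Then for $k\ge0$, $$\|x_{k+1}-x^\star\|\le\|x_k-x^\star\|+\Big(1-\frac\rho\eta\Big)\varepsilon_k.$$
   Context: For an operator $A$, $J_A=(\mathrm{Id}+A)^{-1}$ is its resolvent. *)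

From HB Require Import structures.
From mathcomp Require Import all_boot all_order all_algebra.
From mathcomp Require Import reals.
Set Implicit Arguments. Unset Strict Implicit. Unset Printing Implicit Defensive.
Import Order.TTheory GRing.Theory Num.Theory.
Local Open Scope ring_scope.

Definition dotv (R : realType) (d : nat) (u v : 'rV[R]_d) : R :=
  \sum_(i < d) u ord0 i * v ord0 i.
Definition normv (R : realType) (d : nat) (u : 'rV[R]_d) : R :=
  Num.sqrt (dotv u u).

(* A set-valued operator A : R^d ⇉ R^d is given by its graph: A x u <-> u ∈ A(x). *)
Definition setop (R : realType) (d : nat) := 'rV[R]_d -> 'rV[R]_d -> Prop.

Definition lipschitz (R : realType) (d : nat) (F : 'rV[R]_d -> 'rV[R]_d) (L : R) :=
  forall x y, normv (F x - F y) <= L * normv (x - y).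

Definition monotone_op (R : realType) (d : nat) (A : setop R d) :=
  forall x y u v, A x u -> A y v -> 0 <= dotv (u - v) (x - y).

Definition maximal_monotone (R : realType) (d : nat) (A : setop R d) :=
  monotone_op A /\
  forall B : setop R d, monotone_op B -> (forall x u, A x u -> B x u) ->
    forall x u, B x u -> A x u.

Definition sum_op (R : realType) (d : nat) (F : 'rV[R]_d -> 'rV[R]_d) (G : setop R d)
  : setop R d := fun x u => exists g, G x g /\ u = F x + g.

(* p ∈ J_{eta A}(x) = (Id + eta A)^{-1}(x)  iff  x ∈ p + eta A(p). *)
Definition resolvent (R : realType) (d : nat) (eta : R) (A : setop R d)
  (x p : 'rV[R]_d) : Prop :=
  exists u, A p u /\ x = p + eta *: u.

From HB Require Import structures.
From mathcomp Require Import all_boot all_order all_algebra.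
From mathcomp Require Import reals.
From mathcomp Require Import ring lra.
Import Order.TTheory GRing.Theory Num.Theory.
Local Open Scope ring_scope.

(* Write [p = J_{eta(F+G)}(x_k)], so [x_k = p + eta u] with [u] in [(F+G)(p)].
   With [alpha = 1 - rho/eta] the relaxed step is
   [x_{k+1} - x* = (p - x* + rho u) + alpha (Jt_k - p)].
   Expanding the square, [||q + t u||^2 = ||q||^2 + 2 t <u,q> + t^2 ||u||^2], and
   the weak Minty inequality [<u,q> >= -rho ||u||^2] at [q = p - x*] make
   [||q + rho u|| <= ||q + eta u|| = ||x_k - x*||]; the triangle inequality then
   adds [alpha ||Jt_k - p|| <= alpha eps_k].  Only the weak Minty inequality at
   the resolvent point is used, not the Lipschitz or maximality assumptions. *)

Section EuclideanNorm.
Context {R : realType} {d : nat}.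
Implicit Types (a b q u : 'rV[R]_d) (s t c : R).

Lemma dotvC a b : dotv a b = dotv b a.
Proof. by apply: eq_bigr => i _; rewrite mulrC. Qed.

Lemma dotv_ge0 a : 0 <= dotv a a.
Proof. by apply: sumr_ge0 => i _; rewrite -expr2 sqr_ge0. Qed.

Lemma normv_ge0 a : 0 <= normv a.
Proof. exact: sqrtr_ge0. Qed.

Lemma normv_sq a : normv a ^+ 2 = dotv a a.
Proof. by rewrite sqr_sqrtr // dotv_ge0. Qed.

Lemma dotv_combE s t a b :
  dotv (s *: a + t *: b) (s *: a + t *: b) =
  s ^+ 2 * dotv a a + 2 * s * t * dotv a b + t ^+ 2 * dotv b b.
Proof.
rewrite /dotv !mulr_sumr -!big_split /=.
by apply: eq_bigr => i _; rewrite !mxE; ring.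
Qed.

Lemma dotv_addZE q t u :
  dotv (q + t *: u) (q + t *: u) =
  dotv q q + 2 * t * dotv u q + t ^+ 2 * dotv u u.
Proof. by rewrite -[q in LHS]scale1r dotv_combE dotvC; ring. Qed.

Lemma normvZ c a : normv (c *: a) = `|c| * normv a.
Proof.
have -> : c *: a = c *: a + 0 *: a by rewrite scale0r addr0.
by rewrite /normv dotv_combE !(mul0r, mulr0, expr0n, addr0) sqrtrM ?sqr_ge0 // sqrtr_sqr.
Qed.

Lemma normvN a : normv (- a) = normv a.
Proof. by rewrite -scaleN1r normvZ normrN1 mul1r. Qed.

Lemma dotv_sqr_le a b : dotv a b ^+ 2 <= dotv a a * dotv b b.
Proof.
set A := dotv a a; set B := dotv a b; set C := dotv b b.
have quad s t : 0 <= s ^+ 2 * A + 2 * s * t * B + t ^+ 2 * C.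
  by rewrite -dotv_combE dotv_ge0.
have A_ge0 : 0 <= A := dotv_ge0 a.
have [C_gt0|C_le0] := ltrP 0 C.
  have := quad C (- B).
  have -> : C ^+ 2 * A + 2 * C * - B * B + (- B) ^+ 2 * C = C * (A * C - B ^+ 2).
    by ring.
  by rewrite pmulr_rge0 // subr_ge0.
have C0 : C = 0 by apply/eqP; rewrite eq_le C_le0 dotv_ge0.
(* With [C = 0], evaluating at [(B, -(A + 1))] gives [-(A + 2) B^2 >= 0]. *)
have := quad B (- (A + 1)); rewrite C0 mulr0; nra.
Qed.

Lemma cauchy_schwarz a b : dotv a b <= normv a * normv b.
Proof.
rewrite /normv -sqrtrM ?dotv_ge0 //.
apply: le_trans (ler_norm _) _.
by rewrite -sqrtr_sqr ler_wsqrtr // dotv_sqr_le.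
Qed.

Lemma normvD a b : normv (a + b) <= normv a + normv b.
Proof.
rewrite -ler_sqr ?nnegrE ?addr_ge0 ?normv_ge0 //.
rewrite -[b in a + b]scale1r normv_sq dotv_addZE sqrrD !normv_sq dotvC.
have := cauchy_schwarz a b; lra.
Qed.

Lemma normv_addZ_le rho eta q u :
  - rho * normv u ^+ 2 <= dotv u q -> rho <= eta ->
  normv (q + rho *: u) <= normv (q + eta *: u).
Proof.
rewrite normv_sq => minty rho_le_eta.
apply: ler_wsqrtr; rewrite !dotv_addZE -subr_ge0.
have C_ge0 := dotv_ge0 u.
set A := dotv q q; set B := dotv u q in minty *; set C := dotv u u in minty C_ge0 *.
have -> : A + 2 * eta * B + eta ^+ 2 * C - (A + 2 * rho * B + rho ^+ 2 * C)
  = (eta - rho) * (2 * (B + rho * C) + (eta - rho) * C) by ring.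
by apply: mulr_ge0; [lra | apply: addr_ge0; [lra | apply: mulr_ge0 => //; lra]].
Qed.

End EuclideanNorm.

Lemma relaxed_stepE (R : pzRingType) (V : lmodType R) (a c : R) (p u j : V) :
  (1 - a) *: (p + c *: u) + a *: j = p + ((1 - a) * c) *: u + a *: (j - p).
Proof.
rewrite scalerDr scalerA scalerBl scale1r scalerBr -!addrA; congr (p + _).
by rewrite addrCA [- _ + _]addrC.
Qed.

Theorem lemmaB6 (R : realType) (d : nat) (F : 'rV[R]_d -> 'rV[R]_d) (G : setop R d)
  (L rho eta : R) (xstar : 'rV[R]_d)
  (x Jt : nat -> 'rV[R]_d) (eps : nat -> R) :
  lipschitz F L ->
  maximal_monotone G ->
  (exists z, sum_op F G z 0) ->
  sum_op F G xstar 0 ->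
  (forall z u, sum_op F G z u -> dotv u (z - xstar) >= - rho * normv u ^+ 2) ->
  0 < rho -> rho < eta ->
  (forall k, 0 < eps k) ->
  (forall k, exists p, resolvent eta (sum_op F G) (x k) p /\ normv (p - Jt k) <= eps k) ->
  (forall k, x k.+1 = (1 - (1 - rho / eta)) *: x k + (1 - rho / eta) *: Jt k) ->
  forall k, normv (x k.+1 - xstar) <= normv (x k - xstar) + (1 - rho / eta) * eps k.
Proof.
move=> _ _ _ _ weak_minty rho_gt0 rho_lt_eta _ inexact_resolvent step k.
have [p [[u [FGpu xkE]] p_near]] := inexact_resolvent k.
have eta_gt0 : 0 < eta := lt_trans rho_gt0 rho_lt_eta.
have alpha_ge0 : 0 <= 1 - rho / eta.
  by rewrite subr_ge0 ler_pdivrMr // mul1r ltW.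
have step_coef : (1 - (1 - rho / eta)) * eta = rho by rewrite subKr divfK ?gt_eqF.
rewrite step xkE relaxed_stepE step_coef addrAC !(addrAC p _ (- xstar)).
apply: le_trans (normvD _ _) _; apply: lerD.
  by apply: normv_addZ_le; [exact: weak_minty FGpu | exact: ltW].
by rewrite normvZ ger0_norm // -(opprB p) normvN ler_wpM2l.
Qed.
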